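(* Let $p>2$ be a prime and $n$ a natural number with $n+1<p$. Let $(A,+,\circ)$ be a left brace of cardinality $p^{n}$ which is strongly nilpotent of nilpotency index $k<p$, and suppose the group $(A,\circ)$ is powerful. Let $\gamma$ be a primitive root modulo $p^{p}$, $\xi=\gamma^{p^{p-1}}$, and define $a\cdot b=\sum_{i=0}^{p-2}\xi^{p-1-i}\big((\xi^{i}a)*b\big)$ for $a,b\in A$. Then the pre-Lie ring $(A,+,\cdot)$ is powerful, i.e. $a\cdot b-b\cdot a\in pA$ for all $a,b\in A$.
   Context: A (left) brace is a set $A$ with operations $+,\circ$ such that $(A,+)$ is an abelian group, $(A,\circ)$ is a group, and $a\circ(b+c)+a=a\circ b+a\circ c$; $a*b=a\circ b-a-b$. $A$ is strongly nilpotent of index $k$ if $A^{[k]}=0\ne A^{[k-1]}$, where $A^{[1]}=A$ and $A^{[i]}$ is the additive span of $a*b$ with $a\in A^{[j]}$, $b\in A^{[i-j]}$, $0<j<i$. Under these hypotheses $(A,+,\cdot)$ is a pre-Lie ring. A finite $p$-group $G$ ($p>2$) is powerful if $G'\le G^{p}=\langle g^{p}\rangle$. *)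

From HB Require Import structures.
From mathcomp Require Import all_boot all_order all_algebra.
Set Implicit Arguments. Unset Strict Implicit. Unset Printing Implicit Defensive.
Import GRing.Theory.
Local Open Scope ring_scope.

Record brace (T : zmodType) := Brace {
  circ : T -> T -> T;
  cinv : T -> T;
  cone : T;
  circA : forall a b c, circ a (circ b c) = circ (circ a b) c;
  circ1l : forall a, circ cone a = a;
  circ1r : forall a, circ a cone = a;
  circVl : forall a, circ (cinv a) a = cone;
  circVr : forall a, circ a (cinv a) = cone;
  brace_ax : forall a b c, circ a (b + c) + a = circ a b + circ a c
}.

Section BraceDefs.
Variables (T : zmodType) (B : brace T).

Definition bstar (a b : T) : T := circ B a b - a - b.

(* A^[i] : A^[1] = A, A^[i] = additive span of a*b, a in A^[j], b in A^[i-j], 0<j<i.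
   (Inductive characterization of the additive subgroup generated.) *)
Inductive sn_ideal : nat -> T -> Prop :=
| sn_one : forall a, sn_ideal 1 a
| sn_zero : forall i, sn_ideal i 0
| sn_star : forall i j a b, (0 < j)%N -> (j < i)%N ->
    sn_ideal j a -> sn_ideal (i - j) b -> sn_ideal i (bstar a b)
| sn_sub : forall i x y, sn_ideal i x -> sn_ideal i y -> sn_ideal i (x - y).

(* strongly nilpotent of index k: A^[k] = 0 <> A^[k-1] (k >= 1; for k = 1
   A^[0] is not defined and the condition reduces to A = 0). *)
Definition strongly_nilpotent_index (k : nat) : Prop :=
  (1 <= k)%N /\ (forall x, sn_ideal k x -> x = 0) /\
  (k = 1%N \/ exists x, sn_ideal k.-1 x /\ x <> 0).

Fixpoint cpow (a : T) (m : nat) : T :=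
  match m with 0%N => cone B | m'.+1 => circ B (cpow a m') a end.

Definition in_gen_subgroup (S : T -> Prop) (x : T) : Prop :=
  forall H : T -> Prop,
    H (cone B) -> (forall u v, H u -> H v -> H (circ B u v)) ->
    (forall u, H u -> H (cinv B u)) -> (forall u, S u -> H u) -> H x.

Definition ccomm (a b : T) : T :=
  circ B (circ B (circ B (cinv B a) (cinv B b)) a) b.

(* (A,o) is powerful: G' <= G^p, i.e. the commutator subgroup (generated by
   all commutators) is contained in the subgroup generated by p-th powers. *)
Definition circ_powerful (p : nat) : Prop :=
  forall x, in_gen_subgroup (fun c => exists a b, c = ccomm a b) x ->
            in_gen_subgroup (fun y => exists g, y = cpow g p) x.

Definition predot (p : nat) (xi : int) (a b : T) : T :=
  \sum_(i < p.-1) bstar (a *~ (xi ^+ i)) b *~ (xi ^+ (p.-1 - i)).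

End BraceDefs.

Definition primitive_root_mod (gamma : int) (m : nat) : Prop :=
  coprimez gamma (m%:Z) /\
  forall e : nat, (0 < e)%N -> (e < totient m)%N ->
    ~ ((m%:Z %| gamma ^+ e - 1)%Z).

(* The maps lambda_u(x) = u o x - u are additive, so pA is a subgroup of
   (A, o).  Strong nilpotency of index k < p gives
   g^(o p) = sum_(i < k-1) binom(p, i+1) e_i  (e_0 = g, e_(i+1) = g * e_i)
   with every binomial divisible by p, so the p-th powers lie in pA, hence,
   (A, o) being powerful, so do all commutators.  From
   x o y = (y o x) o [x, y] one gets x * y - y * x = lambda_(y o x)([x, y]),
   so * is commutative modulo pA, and additivity of b * - puts every summand
   of a.b - b.a in pA.  Neither the order of A nor the choice of xi matters. *)

From HB Require Import structures.
From mathcomp Require Import all_boot all_order all_algebra.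
Import GRing.Theory.
Local Open Scope ring_scope.
Set Implicit Arguments. Unset Strict Implicit.

Section Multiples.
Variables (V : zmodType) (p : nat).

Definition is_multiple (x : V) : Prop := exists d, x = d *+ p.

Lemma multiple0 : is_multiple 0.
Proof. by exists 0; rewrite mul0rn. Qed.

Lemma multipleD x y : is_multiple x -> is_multiple y -> is_multiple (x + y).
Proof. by move=> [d ->] [e ->]; exists (d + e); rewrite mulrnDl. Qed.

Lemma multipleN x : is_multiple x -> is_multiple (- x).
Proof. by move=> [d ->]; exists (- d); rewrite mulNrn. Qed.

Lemma multipleMz x z : is_multiple x -> is_multiple (x *~ z).
Proof.
move=> [d ->]; exists (d *~ z).
by rewrite -[d *+ p]mulrz_nat -[d *~ z *+ p]mulrz_nat mulrzAC.
Qed.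

Lemma multipleMn x m : (p %| m)%N -> is_multiple (x *+ m).
Proof. by move=> /dvdnP[q ->]; exists (x *+ q); rewrite mulrnA. Qed.

Lemma multiple_sum (I : Type) (r : seq I) (P : pred I) (F : I -> V) :
  (forall i, P i -> is_multiple (F i)) -> is_multiple (\sum_(i <- r | P i) F i).
Proof. by move=> mF; apply: big_ind => //; [exact: multiple0 | exact: multipleD]. Qed.

End Multiples.

Lemma multiple_raddf (U V : zmodType) (f : {additive U -> V}) p x :
  is_multiple p x -> is_multiple p (f x).
Proof. by move=> [d ->]; exists (f d); rewrite raddfMn. Qed.

Section BraceTheory.
Variables (T : zmodType) (B : brace T).

Definition lambda (u x : T) : T := circ B u x - u.

Lemma circE u x : circ B u x = u + lambda u x.
Proof. by rewrite /lambda addrC subrK. Qed.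

Lemma lambda_is_nmod_morphism u : nmod_morphism (lambda u).
Proof.
have lambda0 : lambda u 0 = 0.
  rewrite /lambda; have := brace_ax B u 0 0; rewrite addr0 => /addrI <-.
  exact: subrr.
split=> // x y.
by rewrite /lambda -[circ B u (x + y)](addrK u) brace_ax addrACA addrA.
Qed.

HB.instance Definition _ u :=
  GRing.isNmodMorphism.Build T T (lambda u) (lambda_is_nmod_morphism u).

Lemma bstarE u x : bstar B u x = lambda u x - x.
Proof. by rewrite /bstar /lambda addrAC. Qed.

Lemma bstar_is_nmod_morphism u : nmod_morphism (bstar B u).
Proof.
split=> [|x y]; first by rewrite bstarE raddf0 subrr.
by rewrite !bstarE raddfD opprD addrACA.
Qed.

HB.instance Definition _ u :=
  GRing.isNmodMorphism.Build T T (bstar B u) (bstar_is_nmod_morphism u).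

Lemma cone_eq0 : cone B = 0.
Proof. by have := brace_ax B (cone B) 0 0; rewrite !circ1l !addr0 add0r. Qed.

Section MultiplesSubgroup.
Variable p : nat.

Lemma multiple_circ x y :
  is_multiple p x -> is_multiple p y -> is_multiple p (circ B x y).
Proof. by move=> mx my; rewrite circE; apply/multipleD/multiple_raddf. Qed.

Lemma multiple_cinv x : is_multiple p x -> is_multiple p (cinv B x).
Proof.
have : circ B (cinv B x) x = 0 by rewrite circVl cone_eq0.
rewrite circE => /eqP; rewrite addr_eq0 => /eqP -> mx.
exact/multipleN/multiple_raddf.
Qed.

Lemma multiple_gen_subgroup (S : T -> Prop) x :
  (forall y, S y -> is_multiple p y) -> in_gen_subgroup B S x -> is_multiple p x.
Proof.
move=> mS; apply; rewrite ?cone_eq0; [exact: multiple0 | exact: multiple_circ |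
  exact: multiple_cinv | exact: mS].
Qed.

End MultiplesSubgroup.

Lemma cpow_circC g m : circ B (cpow B g m) g = circ B g (cpow B g m).
Proof.
elim: m => [|m IH] /=; first by rewrite circ1l circ1r.
by rewrite [RHS]circA -IH.
Qed.

Lemma cpowSr g m : cpow B g m.+1 = g + cpow B g m + bstar B g (cpow B g m).
Proof.
by rewrite /= cpow_circC /bstar -(addrA (circ B g _)) -opprD [RHS]addrC subrK.
Qed.

Lemma cpow_binomial g m :
  cpow B g m = \sum_(i < m) iter i (bstar B g) g *+ 'C(m, i.+1).
Proof.
elim: m => [|m IH]; first by rewrite big_ord0 /= cone_eq0.
have shift : \sum_(i < m.+1) iter i (bstar B g) g *+ 'C(m, i)
    = g + \sum_(i < m) bstar B g (iter i (bstar B g) g *+ 'C(m, i.+1)).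
  rewrite big_ord_recl bin0 mulr1n; congr (_ + _).
  by apply: eq_bigr => i _; rewrite raddfMn.
have drop_top : \sum_(i < m.+1) iter i (bstar B g) g *+ 'C(m, i.+1)
    = \sum_(i < m) iter i (bstar B g) g *+ 'C(m, i.+1).
  by rewrite big_ord_recr /= bin_small // mulr0n addr0.
rewrite cpowSr IH raddf_sum.
under [RHS]eq_bigr => i _ do rewrite binS mulrnDr.
by rewrite [RHS]big_split drop_top shift [RHS]addrCA addrA.
Qed.

Lemma sn_ideal_iter_bstar g i : sn_ideal B i.+1 (iter i (bstar B g) g).
Proof.
elim: i => [|i IH] /=; first exact: sn_one.
by apply: (@sn_star _ B i.+2 1) => //; exact: sn_one.
Qed.

Lemma iter_bstar_eq0 k g i :
  (forall x, sn_ideal B k.+1 x -> x = 0) -> (k <= i)%N -> iter i (bstar B g) g = 0.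
Proof.
move=> Ak0; elim: i => [|i IH].
  by rewrite leqn0 => /eqP k0; apply: Ak0; rewrite k0; exact: sn_ideal_iter_bstar.
rewrite leq_eqVlt => /predU1P[<- | /IH /= ->]; last exact: raddf0.
exact: Ak0 (sn_ideal_iter_bstar g k).
Qed.

Lemma multiple_cpow p k g :
  prime p -> strongly_nilpotent_index B k -> (k < p)%N -> is_multiple p (cpow B g p).
Proof.
move=> p_pr [k_gt0 [Ak0 _]] lt_kp; rewrite cpow_binomial.
apply: multiple_sum => i _; case: (ltnP i.+1 p) => [lt_ip | le_pi].
  by apply: multipleMn; rewrite prime_dvd_bin.
rewrite -(prednK k_gt0) in Ak0.
rewrite (iter_bstar_eq0 _ Ak0) ?mul0rn; first exact: multiple0.
by rewrite -ltnS prednK // (leq_trans (ltnW lt_kp)).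
Qed.

Lemma circ_ccomm x y : circ B (circ B y x) (ccomm B x y) = circ B x y.
Proof.
by rewrite /ccomm !circA -(circA B y x) circVr circ1r circVr circ1l.
Qed.

(* Both sides equal x o y - y o x, since x o y = (y o x) o [x, y]. *)
Lemma bstar_antisym x y :
  bstar B x y - bstar B y x = lambda (circ B y x) (ccomm B x y).
Proof.
rewrite /lambda circ_ccomm /bstar !opprB -!addrA; congr (_ + _).
by rewrite addrCA !addKr.
Qed.

Lemma multiple_bstar_antisym p :
  circ_powerful B p -> (forall g, is_multiple p (cpow B g p)) ->
  forall x y, is_multiple p (bstar B x y - bstar B y x).
Proof.
move=> powerful mpow x y; rewrite bstar_antisym; apply: multiple_raddf.
apply: multiple_gen_subgroup (powerful _ _) => [_ [g ->] // | H _ _ _ SH].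
by apply: SH; exists x, y.
Qed.

Lemma multiple_predot_antisym p q xi :
  (forall x y, is_multiple p (bstar B x y - bstar B y x)) ->
  forall a b, is_multiple p (predot B q xi a b - predot B q xi b a).
Proof.
move=> manti a b; rewrite /predot -sumrB; apply: multiple_sum => i _.
rewrite -mulrzBl; apply: multipleMz.
set z := xi ^+ i.
have -> : bstar B (a *~ z) b - bstar B (b *~ z) a
    = (bstar B (a *~ z) b - bstar B b a *~ z)
    + (bstar B b a - bstar B a b) *~ z
    + (bstar B a b *~ z - bstar B (b *~ z) a).
  (* generalized so that [addrA] cannot unfold [bstar] *)
  rewrite mulrzBl.
  move: (bstar B (a *~ z) b) (bstar B (b *~ z) a) (bstar B b a *~ z) (bstar B a b *~ z).
  by move=> X W U V; rewrite !addrA !subrK.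
rewrite -[bstar B b a *~ z]raddfMz -[bstar B a b *~ z]raddfMz.
apply: multipleD; [apply: multipleD |].
- exact: manti.
- exact/multipleMz/manti.
- exact: manti.
Qed.

End BraceTheory.

Unset Implicit Arguments.

Theorem proposition2p9 (p n k : nat) (T : finZmodType) (B : brace T) (gamma : int) :
  prime p -> (2 < p)%N -> (n.+1 < p)%N ->
  #|T| = (p ^ n)%N ->
  strongly_nilpotent_index B k -> (k < p)%N ->
  circ_powerful B p ->
  primitive_root_mod gamma (p ^ p) ->
  let xi := gamma ^+ (p ^ p.-1) in
  forall a b : T, exists c : T,
    predot B p xi a b - predot B p xi b a = c *+ p.
Proof.
move=> p_pr _ _ _ nil_k lt_kp powerful _ xi.
apply: multiple_predot_antisym; apply: multiple_bstar_antisym powerful _ => g.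
exact: multiple_cpow nil_k lt_kp.
Qed.
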